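(* For each $0<c<1/2$ the equation $$-jcK\!\left(\tfrac{(c^2-1)(1-j^2)}{c^2}\right)+\tfrac{j}{c}\Pi\!\left(\tfrac{c^2-1}{c^2},\tfrac{(c^2-1)(1-j^2)}{c^2}\right)=\tfrac{\pi}{4}$$ has exactly one solution $j\in[0,1]$.
   Context: For $k,n<1$: $K(k)=\int_0^{\pi/2}(1-k\sin^2\theta)^{-1/2}d\theta$ and $\Pi(n,k)=\int_0^{\pi/2}\frac{d\theta}{(1-n\sin^2\theta)\sqrt{1-k\sin^2\theta}}$. *)

From Stdlib Require Import Reals.
From Coquelicot Require Import Coquelicot.
Open Scope R_scope.

(* Complete elliptic integral of the first kind, parameter convention:
   K(k) = int_0^{pi/2} (1 - k sin^2 t)^{-1/2} dt   (for k < 1). *)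
Definition ellK (k : R) : R :=
  RInt (fun t => / sqrt (1 - k * (sin t) ^ 2)) 0 (PI / 2).

Definition ellPi (n k : R) : R :=
  RInt (fun t => / ((1 - n * (sin t) ^ 2) * sqrt (1 - k * (sin t) ^ 2))) 0 (PI / 2).

From Stdlib Require Import Reals Lra Psatz.
From Coquelicot Require Import Coquelicot.
Open Scope R_scope.

(* Write b = (1 - c^2)/c^2 > 0 and s(t) = b sin^2 t.  After
   substituting the arguments, both elliptic integrals share the radicand
   1 + s(t)(1 - j^2), and the left-hand side of the equation becomes
     F(j) = int_0^{pi/2} w(t) * j / sqrt (1 + s(t) (1 - j^2)) dt,
   with the weight w(t) = 1/(c(1 + s(t))) - c, which is >= 0, <= 1/c, and
   > 0 on the open interval.  The profile j / sqrt (1 + s (1 - j^2)) is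
   strictly increasing and (1 + s)-Lipschitz in j on [0,1], hence F is
   strictly increasing and Lipschitz on [0,1].  Moreover F(0) = 0 and,
   since the profile equals 1 at j = 1, F(1) = int w = (1 - c) pi/2, computed
   with an explicit arctangent primitive.  For c < 1/2 we have
   0 < pi/4 < (1 - c) pi/2, so a general intermediate-value lemma for strictly
   increasing Lipschitz functions gives exactly one solution in [0,1]. *)

Lemma lipschitz_continuity_pt (f : R -> R) (L x : R) :
  0 <= L -> (forall u v, Rabs (f u - f v) <= L * Rabs (u - v)) ->
  continuity_pt f x.
Proof.
  intros HL Hf eps Heps.
  exists (eps / (L + 1)); split; [apply Rdiv_lt_0_compat; lra|].
  intros u [_ Hu]; simpl in *; unfold R_dist in *.
  assert (Hd : L * (eps / (L + 1)) < eps).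
  { apply (Rmult_lt_reg_r (L + 1)); [lra|].
    replace (L * (eps / (L + 1)) * (L + 1)) with (L * eps) by (field; lra). nra. }
  eapply Rle_lt_trans; [apply Hf|].
  eapply Rle_lt_trans; [|exact Hd].
  apply Rmult_le_compat_l; lra.
Qed.

(* Projection of the real line onto [a, b]; it extends a function given on
   [a, b] to a function on R without changing its Lipschitz constant. *)
Definition clamp (a b x : R) : R := Rmax a (Rmin b x).

Lemma clamp_in (a b x : R) : a <= b -> a <= clamp a b x <= b.
Proof. intros; unfold clamp, Rmax, Rmin; repeat destruct Rle_dec; lra. Qed.

Lemma clamp_id (a b x : R) : a <= x <= b -> clamp a b x = x.
Proof. intros; unfold clamp, Rmax, Rmin; repeat destruct Rle_dec; lra. Qed.

Lemma clamp_contraction (a b x y : R) : Rabs (clamp a b x - clamp a b y) <= Rabs (x - y).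
Proof.
  unfold clamp, Rmax, Rmin, Rabs; repeat destruct Rle_dec; repeat destruct Rcase_abs; lra.
Qed.

(* Continuity on the closed interval comes from clamping. *)
Lemma increasing_lipschitz_unique_value (f : R -> R) (a b L y : R) :
  a < b -> 0 <= L ->
  (forall u v, a <= u < v -> v <= b -> f u < f v) ->
  (forall u v, a <= u <= v -> v <= b -> f v - f u <= L * (v - u)) ->
  f a < y < f b ->
  exists! x, (a <= x <= b) /\ f x = y.
Proof.
  intros Hab HL Hinc Hlip Hy.
  assert (Hlip_abs : forall u v, a <= u <= b -> a <= v <= b ->
            Rabs (f u - f v) <= L * Rabs (u - v)).
  { intros u v Hu Hv.
    destruct (Rtotal_order u v) as [Huv|[->|Huv]].
    - specialize (Hinc u v ltac:(lra) ltac:(lra)); specialize (Hlip u v ltac:(lra) ltac:(lra)).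
      rewrite !Rabs_left by lra; lra.
    - rewrite !Rminus_diag, Rabs_R0; lra.
    - specialize (Hinc v u ltac:(lra) ltac:(lra)); specialize (Hlip v u ltac:(lra) ltac:(lra)).
      rewrite !Rabs_right by lra; lra. }
  set (g := fun x => f (clamp a b x) - y).
  assert (Hg : forall u v, Rabs (g u - g v) <= L * Rabs (u - v)).
  { intros u v; unfold g.
    replace (f (clamp a b u) - y - (f (clamp a b v) - y))
      with (f (clamp a b u) - f (clamp a b v)) by ring.
    eapply Rle_trans; [apply Hlip_abs; apply clamp_in; lra|].
    apply Rmult_le_compat_l; [lra|apply clamp_contraction]. }
  destruct (Ranalysis5.IVT_interv g a b) as [x [Hx Hgx]].
  - intros; apply (lipschitz_continuity_pt g L); assumption.
  - exact Hab.
  - unfold g; rewrite clamp_id by lra; lra.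
  - unfold g; rewrite clamp_id by lra; lra.
  - unfold g in Hgx; rewrite clamp_id in Hgx by lra.
    exists x; split; [split; [exact Hx|lra]|].
    intros x' [Hx' Hfx'].
    destruct (Rtotal_order x x') as [H|[H|H]]; [|exact H|].
    + specialize (Hinc x x' ltac:(lra) ltac:(lra)); lra.
    + specialize (Hinc x' x ltac:(lra) ltac:(lra)); lra.
Qed.

Lemma RInt_lincomb (f g : R -> R) (a b u v : R) :
  ex_RInt f a b -> ex_RInt g a b ->
  u * RInt f a b + v * RInt g a b = RInt (fun t => u * f t + v * g t) a b.
Proof.
  intros Hf Hg; symmetry; apply is_RInt_unique.
  apply (@is_RInt_plus R_CompleteNormedModule (fun t => u * f t) (fun t => v * g t));
    apply (@is_RInt_scal R_CompleteNormedModule), RInt_correct; assumption.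
Qed.

(* The j-dependence of the integrand, for a frozen value s >= 0 of b sin^2 t. *)
Definition profile (s j : R) : R := j / sqrt (1 + s * (1 - j ^ 2)).

Lemma profile_root (s j : R) : 0 <= s -> 0 <= j <= 1 ->
  1 <= sqrt (1 + s * (1 - j ^ 2)) /\
  sqrt (1 + s * (1 - j ^ 2)) * sqrt (1 + s * (1 - j ^ 2)) = 1 + s * (1 - j ^ 2).
Proof.
  intros Hs Hj.
  assert (H1 : 1 <= 1 + s * (1 - j ^ 2)) by (assert (0 <= 1 - j ^ 2) by nra; nra).
  split.
  - rewrite <- sqrt_1 at 1; apply sqrt_le_1_alt; lra.
  - apply sqrt_sqrt; lra.
Qed.

Lemma profile_root_antitone (s j1 j2 : R) : 0 <= s -> 0 <= j1 <= j2 -> j2 <= 1 ->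
  sqrt (1 + s * (1 - j2 ^ 2)) <= sqrt (1 + s * (1 - j1 ^ 2)).
Proof.
  intros Hs Hj Hj2; apply sqrt_le_1_alt.
  assert (j1 ^ 2 <= j2 ^ 2) by nra.
  nra.
Qed.

Lemma profile_lt (s j1 j2 : R) : 0 <= s -> 0 <= j1 < j2 -> j2 <= 1 ->
  profile s j1 < profile s j2.
Proof.
  intros Hs Hj Hj2; unfold profile.
  destruct (profile_root s j1) as [A1 B1]; [lra|lra|].
  destruct (profile_root s j2) as [A2 B2]; [lra|lra|].
  set (r1 := sqrt (1 + s * (1 - j1 ^ 2))) in *.
  set (r2 := sqrt (1 + s * (1 - j2 ^ 2))) in *.
  assert (Hr : r2 <= r1) by (apply profile_root_antitone; lra).
  apply (Rmult_lt_reg_r (r1 * r2)); [nra|].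
  replace (j1 / r1 * (r1 * r2)) with (j1 * r2) by (field; lra).
  replace (j2 / r2 * (r1 * r2)) with (j2 * r1) by (field; lra).
  nra.
Qed.

Lemma profile_lipschitz (s j1 j2 : R) : 0 <= s -> 0 <= j1 <= j2 -> j2 <= 1 ->
  profile s j2 - profile s j1 <= (1 + s) * (j2 - j1).
Proof.
  intros Hs Hj Hj2; unfold profile.
  destruct (profile_root s j1) as [A1 B1]; [lra|lra|].
  destruct (profile_root s j2) as [A2 B2]; [lra|lra|].
  set (r1 := sqrt (1 + s * (1 - j1 ^ 2))) in *.
  set (r2 := sqrt (1 + s * (1 - j2 ^ 2))) in *.
  assert (Esq : r1 * r1 - r2 * r2 = s * (j2 - j1) * (j2 + j1)) by (rewrite B1, B2; ring).
  assert (Hr : r2 <= r1) by (apply profile_root_antitone; lra).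
  (* r1 - r2 = s (j2 - j1) (j2 + j1) / (r1 + r2), with j2 + j1 <= 2 <= r1 + r2 *)
  assert (Hgap : r1 - r2 <= s * (j2 - j1)).
  { assert (0 <= s * (j2 - j1)) by (apply Rmult_le_pos; lra). nra. }
  assert (Hr12 : 1 <= r1 * r2) by nra.
  assert (Hnum : j2 * r1 - j1 * r2 <= (1 + s) * (j2 - j1) * (r1 * r2)).
  { assert (Hd : 0 <= s * (j2 - j1)) by (apply Rmult_le_pos; lra).
    assert (T1 : 0 <= (j2 - j1) * r1 * (r2 - 1))
      by (apply Rmult_le_pos; [apply Rmult_le_pos|]; lra).
    assert (T2 : j1 * (r1 - r2) <= s * (j2 - j1)) by nra.
    assert (T3 : 0 <= s * (j2 - j1) * (r1 * r2 - 1)) by (apply Rmult_le_pos; lra).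
    nra. }
  apply (Rmult_le_reg_r (r1 * r2)); [nra|].
  replace ((j2 / r2 - j1 / r1) * (r1 * r2)) with (j2 * r1 - j1 * r2) by (field; lra).
  lra.
Qed.

(* b = (1 - c^2)/c^2, so that the elliptic parameters are -b and -b (1 - j^2). *)
Definition stretch (c : R) : R := (1 - c ^ 2) / c ^ 2.

Lemma stretch_pos (c : R) : 0 < c < 1 -> 0 < stretch c.
Proof. intros; unfold stretch; apply Rdiv_lt_0_compat; nra. Qed.

Lemma sin2_bounds (t : R) : 0 <= sin t ^ 2 <= 1.
Proof. pose proof (sin2_cos2 t) as E; unfold Rsqr in E; nra. Qed.

Lemma stretch_sin2_bounds (c t : R) : 0 < c < 1 ->
  0 <= stretch c * sin t ^ 2 <= stretch c.
Proof. intros Hc; pose proof (stretch_pos c Hc); pose proof (sin2_bounds t); nra. Qed.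

Lemma quotient_bounds (c t : R) : 0 < c < 1 ->
  c ^ 2 <= c ^ 2 + (1 - c ^ 2) * sin t ^ 2 <= 1.
Proof.
  intros Hc; pose proof (sin2_bounds t).
  assert (0 <= 1 - c ^ 2) by nra.
  assert (0 <= (1 - c ^ 2) * sin t ^ 2) by (apply Rmult_le_pos; lra).
  assert ((1 - c ^ 2) * sin t ^ 2 <= 1 - c ^ 2) by nra.
  lra.
Qed.

Definition weight (c t : R) : R := / (c * (1 + stretch c * sin t ^ 2)) - c.

Lemma weight_closed_form (c t : R) : 0 < c < 1 ->
  weight c t = c / (c ^ 2 + (1 - c ^ 2) * sin t ^ 2) - c.
Proof.
  intros Hc; pose proof (quotient_bounds c t Hc).
  unfold weight, stretch; field; split; nra.
Qed.

Lemma weight_bounds (c t : R) : 0 < c < 1 -> 0 <= weight c t <= / c.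
Proof.
  intros Hc; rewrite weight_closed_form by exact Hc.
  pose proof (quotient_bounds c t Hc) as [Hq1 Hq2].
  set (q := c ^ 2 + (1 - c ^ 2) * sin t ^ 2) in *.
  assert (Hq : 0 < q) by nra.
  split.
  - apply (Rmult_le_reg_r q); [exact Hq|].
    replace ((c / q - c) * q) with (c * (1 - q)) by (field; lra). nra.
  - apply (Rmult_le_reg_r (c * q)); [nra|].
    replace ((c / q - c) * (c * q)) with (c ^ 2 * (1 - q)) by (field; lra).
    replace (/ c * (c * q)) with q by (field; lra). nra.
Qed.

(* w > 0 on the open interval, where sin^2 t < 1 forces q < 1. *)
Lemma weight_pos (c t : R) : 0 < c < 1 -> 0 < t < PI / 2 -> 0 < weight c t.
Proof.
  intros Hc Ht; rewrite weight_closed_form by exact Hc.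
  assert (Hcos : 0 < cos t) by (apply cos_gt_0; lra).
  assert (Hsin : sin t ^ 2 < 1) by (pose proof (sin2_cos2 t) as E; unfold Rsqr in E; nra).
  pose proof (quotient_bounds c t Hc) as [Hq1 _].
  set (q := c ^ 2 + (1 - c ^ 2) * sin t ^ 2) in *.
  assert (Hq : 0 < q) by nra.
  assert (Hc2 : 0 < 1 - c ^ 2) by nra.
  assert (Hq2 : q < 1) by (unfold q; nra).
  apply (Rmult_lt_reg_r q); [exact Hq|].
  replace ((c / q - c) * q) with (c * (1 - q)) by (field; lra). nra.
Qed.

(* An explicit primitive of the weight, smooth on the whole real line. *)
Definition weight_primitive (c t : R) : R :=
  (1 - c) * t + atan ((1 - c) * sin t * cos t / (c + (1 - c) * sin t ^ 2)).

Lemma weight_primitive_derive (c t : R) : 0 < c < 1 ->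
  is_derive (weight_primitive c) t (weight c t).
Proof.
  intros Hc; rewrite weight_closed_form by exact Hc.
  unfold weight_primitive.
  pose proof (sin2_cos2 t) as E; unfold Rsqr in E.
  assert (Hd : 0 < c + (1 - c) * sin t ^ 2) by nra.
  assert (Hq : 0 < c ^ 2 + (1 - c ^ 2) * sin t ^ 2)
    by (pose proof (quotient_bounds c t Hc); nra).
  auto_derive; [lra|].
  generalize dependent (sin t); generalize dependent (cos t); intros co s E Hd Hq.
  set (d := c + (1 - c) * (s * (s * 1))).
  assert (Hdpos : 0 < d) by (unfold d; rewrite Rmult_1_r; simpl in Hd; lra).
  assert (Hnum : 0 <= ((1 - c) * s) ^ 2 * (co * co))
    by (apply Rmult_le_pos; [apply pow2_ge_0|apply Rle_0_sqr]).
  (* the derivative of atan (u / d) written over the common denominator d^2 + u^2 *)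
  transitivity ((1 - c) + ((1 - c) * (co * co - s * s) * d - 2 * (1 - c) ^ 2 * s ^ 2 * (co * co))
                        / (d ^ 2 + (1 - c) ^ 2 * s ^ 2 * (co * co))).
  { field; split; apply Rgt_not_eq; [|exact Hdpos].
    apply Rplus_lt_le_0_compat; [apply pow_lt|]; assumption. }
  (* using cos^2 = 1 - sin^2, that denominator is the quotient c^2 + (1 - c^2) sin^2 *)
  replace (co * co) with (1 - s * s) by lra.
  replace (d ^ 2 + (1 - c) ^ 2 * s ^ 2 * (1 - s * s)) with (c ^ 2 + (1 - c ^ 2) * s ^ 2)
    by (unfold d; ring).
  unfold d; field; apply Rgt_not_eq; exact Hq.
Qed.

Lemma weight_derivable (c t : R) : 0 < c < 1 -> ex_derive (weight c) t.
Proof.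
  intros Hc; pose proof (stretch_sin2_bounds c t Hc).
  unfold weight; auto_derive; apply Rgt_not_eq; nra.
Qed.

(* int_0^{pi/2} w = (1 - c) pi/2: the arctangent term vanishes at both ends. *)
Lemma weight_integral (c : R) : 0 < c < 1 ->
  RInt (weight c) 0 (PI / 2) = (1 - c) * (PI / 2).
Proof.
  intros Hc; apply is_RInt_unique.
  replace ((1 - c) * (PI / 2)) with (minus (weight_primitive c (PI / 2)) (weight_primitive c 0)).
  - apply (@is_RInt_derive R_CompleteNormedModule); intros t _.
    + apply weight_primitive_derive, Hc.
    + apply (@ex_derive_continuous R_AbsRing R_NormedModule), weight_derivable, Hc.
  - unfold minus, plus, opp, weight_primitive; simpl.
    rewrite sin_PI2, cos_PI2, sin_0, cos_0, !Rmult_0_r, !Rmult_0_l, !Rdiv_0_l, atan_0.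
    ring.
Qed.

Definition integrand (c j t : R) : R := weight c t * profile (stretch c * sin t ^ 2) j.

Definition reduced_lhs (c j : R) : R := RInt (integrand c j) 0 (PI / 2).

Lemma root_arg_pos (c j t : R) : 0 < c < 1 -> 0 <= j <= 1 ->
  0 < 1 + stretch c * sin t ^ 2 * (1 - j ^ 2).
Proof.
  intros Hc Hj; pose proof (stretch_sin2_bounds c t Hc).
  assert (0 <= 1 - j ^ 2) by nra.
  assert (0 <= stretch c * sin t ^ 2 * (1 - j ^ 2)) by (apply Rmult_le_pos; lra).
  lra.
Qed.

Lemma integrand_continuous (c j t : R) : 0 < c < 1 -> 0 <= j <= 1 ->
  continuous (integrand c j) t.
Proof.
  intros Hc Hj; apply (@ex_derive_continuous R_AbsRing R_NormedModule).
  pose proof (stretch_sin2_bounds c t Hc) as Hs; pose proof (root_arg_pos c j t Hc Hj) as Hr.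
  unfold integrand, weight, profile; auto_derive; simpl in *.
  repeat split.
  - apply Rgt_not_eq; nra.
  - exact Hr.
  - apply Rgt_not_eq, sqrt_lt_R0, Hr.
Qed.

Lemma reduced_lhs_lt (c j1 j2 : R) : 0 < c < 1 -> 0 <= j1 < j2 -> j2 <= 1 ->
  reduced_lhs c j1 < reduced_lhs c j2.
Proof.
  intros Hc Hj Hj2; pose proof PI_RGT_0.
  apply RInt_lt; [lra| |intros; apply integrand_continuous; lra|].
  - intros; apply integrand_continuous; lra.
  - intros t Ht; unfold integrand.
    apply Rmult_lt_compat_l; [apply weight_pos; lra|].
    apply profile_lt; [apply stretch_sin2_bounds| |]; lra.
Qed.

Definition lipschitz_constant (c : R) : R := PI / 2 * (/ c * (1 + stretch c)).

Lemma lipschitz_constant_nonneg (c : R) : 0 < c < 1 -> 0 <= lipschitz_constant c.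
Proof.
  intros Hc; pose proof PI_RGT_0; pose proof (stretch_pos c Hc).
  assert (0 < / c) by (apply Rinv_0_lt_compat; lra).
  unfold lipschitz_constant; apply Rmult_le_pos; [lra|apply Rmult_le_pos; lra].
Qed.

Lemma reduced_lhs_lipschitz (c j1 j2 : R) : 0 < c < 1 -> 0 <= j1 <= j2 -> j2 <= 1 ->
  reduced_lhs c j2 - reduced_lhs c j1 <= lipschitz_constant c * (j2 - j1).
Proof.
  intros Hc Hj Hj2; pose proof PI_RGT_0.
  assert (Hex : forall j, 0 <= j <= 1 -> ex_RInt (integrand c j) 0 (PI / 2)).
  { intros j Hj'; apply (@ex_RInt_continuous R_CompleteNormedModule).
    intros; apply integrand_continuous; lra. }
  unfold reduced_lhs.
  rewrite <- (RInt_minus (integrand c j2) (integrand c j1)) by (apply Hex; lra).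
  replace (lipschitz_constant c * (j2 - j1))
    with (RInt (fun _ => / c * (1 + stretch c) * (j2 - j1)) 0 (PI / 2))
    by (rewrite RInt_const; unfold lipschitz_constant, scal; simpl; unfold mult; simpl; ring).
  apply RInt_le; [lra| |apply ex_RInt_const|].
  - apply (@ex_RInt_continuous R_CompleteNormedModule); intros.
    apply (@continuous_minus R_UniformSpace R_AbsRing R_NormedModule);
      apply integrand_continuous; lra.
  - intros t _; unfold integrand; change (minus ?a ?b) with (a - b).
    pose proof (weight_bounds c t Hc) as Hw.
    pose proof (stretch_sin2_bounds c t Hc) as Hs.
    set (s := stretch c * sin t ^ 2) in *.
    assert (Hmono : 0 <= profile s j2 - profile s j1).
    { destruct (Req_dec j1 j2) as [<-|Hne]; [lra|].
      pose proof (profile_lt s j1 j2 ltac:(lra) ltac:(lra) Hj2); lra. }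
    assert (Hlip : profile s j2 - profile s j1 <= (1 + stretch c) * (j2 - j1)).
    { pose proof (profile_lipschitz s j1 j2 ltac:(lra) Hj Hj2).
      assert (s * (j2 - j1) <= stretch c * (j2 - j1)) by nra. nra. }
    replace (weight c t * profile s j2 - weight c t * profile s j1)
      with (weight c t * (profile s j2 - profile s j1)) by ring.
    rewrite Rmult_assoc; apply Rmult_le_compat; lra.
Qed.

Lemma reduced_lhs_at_0 (c : R) : reduced_lhs c 0 = 0.
Proof.
  unfold reduced_lhs.
  rewrite (RInt_ext _ (fun _ => 0)).
  - rewrite RInt_const; apply Rmult_0_r.
  - intros t _; unfold integrand, profile; rewrite Rdiv_0_l; apply Rmult_0_r.
Qed.

Lemma reduced_lhs_at_1 (c : R) : 0 < c < 1 -> reduced_lhs c 1 = (1 - c) * (PI / 2).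
Proof.
  intros Hc; rewrite <- weight_integral by exact Hc; unfold reduced_lhs.
  apply RInt_ext; intros t _; unfold integrand, profile.
  replace (1 + stretch c * sin t ^ 2 * (1 - 1 ^ 2)) with 1 by ring.
  rewrite sqrt_1; unfold Rdiv; rewrite Rinv_1, !Rmult_1_r; reflexivity.
Qed.

(* The left-hand side of the equation equals F(j): the two elliptic integrands
   combine into w(t) times the profile. *)
Lemma elliptic_combination (c j : R) : 0 < c < 1 -> 0 <= j <= 1 ->
  - j * c * ellK ((c ^ 2 - 1) * (1 - j ^ 2) / c ^ 2)
  + j / c * ellPi ((c ^ 2 - 1) / c ^ 2) ((c ^ 2 - 1) * (1 - j ^ 2) / c ^ 2)
  = reduced_lhs c j.
Proof.
  intros Hc Hj; unfold ellK, ellPi, reduced_lhs.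
  set (root := fun t => sqrt (1 + stretch c * sin t ^ 2 * (1 - j ^ 2))).
  assert (Eroot : forall t,
    sqrt (1 - (c ^ 2 - 1) * (1 - j ^ 2) / c ^ 2 * sin t ^ 2) = root t).
  { intros t; unfold root, stretch; f_equal; field; lra. }
  assert (Epole : forall t, 1 - (c ^ 2 - 1) / c ^ 2 * sin t ^ 2 = 1 + stretch c * sin t ^ 2).
  { intros t; unfold stretch; field; lra. }
  assert (Hroot : forall t, 0 < root t)
    by (intros t; apply sqrt_lt_R0, root_arg_pos; assumption).
  assert (Hpole : forall t, 0 < 1 + stretch c * sin t ^ 2)
    by (intros t; pose proof (stretch_sin2_bounds c t Hc); lra).
  rewrite RInt_lincomb.
  - apply RInt_ext; intros t _.
    rewrite Eroot, Epole; unfold integrand, weight, profile; fold (root t).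
    pose proof (Hroot t); pose proof (Hpole t).
    match goal with |- ?x = ?y => change (@eq R x y) end.
    field; repeat split; apply Rgt_not_eq; lra.
  - apply (ex_RInt_ext (fun t => / root t)); [intros; rewrite Eroot; reflexivity|].
    apply (@ex_RInt_continuous R_CompleteNormedModule); intros t _.
    apply (@ex_derive_continuous R_AbsRing R_NormedModule).
    pose proof (Hroot t); pose proof (root_arg_pos c j t Hc Hj).
    unfold root in *; auto_derive; split; [|split]; try apply Rgt_not_eq; simpl in *; lra.
  - apply (ex_RInt_ext (fun t => / ((1 + stretch c * sin t ^ 2) * root t)));
      [intros; rewrite Eroot, Epole; reflexivity|].
    apply (@ex_RInt_continuous R_CompleteNormedModule); intros t _.
    apply (@ex_derive_continuous R_AbsRing R_NormedModule).
    pose proof (Hroot t); pose proof (Hpole t); pose proof (root_arg_pos c j t Hc Hj).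
    unfold root in *; auto_derive; simpl in *.
    repeat split; [lra|apply Rgt_not_eq, Rmult_lt_0_compat; lra].
Qed.

Theorem mainTheorem8 (c : R) (hc0 : 0 < c) (hc1 : c < 1 / 2) :
  exists! j : R, (0 <= j <= 1) /\
    - j * c * ellK ((c ^ 2 - 1) * (1 - j ^ 2) / c ^ 2)
    + j / c * ellPi ((c ^ 2 - 1) / c ^ 2) ((c ^ 2 - 1) * (1 - j ^ 2) / c ^ 2)
    = PI / 4.
Proof.
  assert (Hc : 0 < c < 1) by lra.
  pose proof PI_RGT_0 as Hpi.
  assert (Hrange : reduced_lhs c 0 < PI / 4 < reduced_lhs c 1).
  { rewrite reduced_lhs_at_0, reduced_lhs_at_1 by exact Hc; split; nra. }
  destruct (increasing_lipschitz_unique_value (reduced_lhs c) 0 1 (lipschitz_constant c) (PI / 4))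
    as [j [[Hj Ej] Huniq]].
  - lra.
  - apply lipschitz_constant_nonneg, Hc.
  - intros; apply reduced_lhs_lt; assumption.
  - intros; apply reduced_lhs_lipschitz; assumption.
  - exact Hrange.
  - exists j; split.
    + split; [exact Hj|]; rewrite elliptic_combination; assumption.
    + intros j' [Hj' Ej']; apply Huniq; split; [exact Hj'|].
      rewrite <- elliptic_combination; assumption.
Qed.
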